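(* Let $d\ge 2$, $\eta\in[0,1]$ and $\epsilon\in[0,1]$, and let $\mathcal{M}_\eta$ be the quantum erasure channel on $\mathcal{H}_X\cong\mathbb{C}^d$ (defined in the context). Call a quantum channel (CPTP map) $\Lambda:\mathcal{L}(\mathcal{H}_X)\to\mathcal{L}(\mathcal{H}_X)$ admissible if $$F\big(\mathcal{M}_\eta(\rho),\,\mathcal{M}_\eta(\Lambda(\rho))\big)\ \ge\ 1-\epsilon\quad\text{for every density operator }\rho\text{ on }\mathcal{H}_X .$$ Then: (i) If $\eta^2\ge 1-\epsilon$, the channel $\Lambda(\rho)=\mathrm{Tr}(\rho)\,|1\rangle\langle 1|$ (for a fixed unit vector $|1\rangle\in\mathcal{H}_X$) is admissible, and its vector kernel $\mathcal{K}(\Lambda)$ has dimension $d-1$, so that its compressibility $\dim\mathcal{K}(\Lambda)/(d-1)$ equals $1$ (the maximum possible value). (ii) If $\eta^2<1-\epsilon$, then every admissible channel $\Lambda$ has trivial vector kernel, $\mathcal{K}(\Lambda)=\{0\}$, i.e. compressibility $0$.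
   Context: Fidelity of density operators: $F(\rho,\sigma)=\big[\mathrm{Tr}\sqrt{\sqrt{\rho}\,\sigma\sqrt{\rho}}\big]^2$. Quantum erasure channel: let $\mathcal{H}_Y=\mathcal{H}_X\oplus\mathrm{span}\{|\alpha\rangle\}\cong\mathbb{C}^{d+1}$, where $|\alpha\rangle$ is a unit vector orthogonal to $\mathcal{H}_X$; $\mathcal{M}_\eta:\mathcal{L}(\mathcal{H}_X)\to\mathcal{L}(\mathcal{H}_Y)$, $\mathcal{M}_\eta(\rho)=(1-\eta)\rho+\eta\,\mathrm{Tr}(\rho)|\alpha\rangle\langle\alpha|$. Vector kernel of a linear map $\Lambda:\mathcal{L}(\mathcal{H}_X)\to\mathcal{L}(\mathcal{H}_X)$: $\mathcal{K}(\Lambda)=\{|\psi\rangle\in\mathcal{H}_X:\ \Lambda(\rho)|\psi\rangle=0\ \text{for all density operators }\rho\}$, a subspace of $\mathcal{H}_X$. The quantum compressibility of $\Lambda$ is $\dim\mathcal{K}(\Lambda)/(d-1)$. *)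

From Stdlib Require Import ClassicalEpsilon.
From HB Require Import structures.
From mathcomp Require Import all_boot all_order all_algebra.
Set Implicit Arguments. Unset Strict Implicit. Unset Printing Implicit Defensive.
Import Order.TTheory GRing.Theory Num.Theory.
Local Open Scope ring_scope.

Section QDefs.
Variable C : numClosedFieldType.

Definition dagmx m n (A : 'M[C]_(m, n)) : 'M[C]_(n, m) := (map_mx Num.conj A)^T.

(* positive semidefinite: <v, A v> >= 0 for all v (order of C: real & >= 0) *)
Definition psdmx n (A : 'M[C]_n) : Prop :=
  forall v : 'cV[C]_n, 0 <= (dagmx v *m A *m v) 0 0.

Definition densitymx n (rho : 'M[C]_n) : Prop := psdmx rho /\ \tr rho = 1.

(* the positive semidefinite square root (chosen; unique for psd A) *)
Definition psd_sqrt n (A : 'M[C]_n) : 'M[C]_n :=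
  epsilon (inhabits 0) (fun B : 'M[C]_n => psdmx B /\ B *m B = A).

Definition fidelity n (rho sigma : 'M[C]_n) : C :=
  (\tr (psd_sqrt (psd_sqrt rho *m sigma *m psd_sqrt rho))) ^+ 2.

(* index of the basis vector |i> (x) |a> of C^k (x) C^d *)
Definition tidx k d (i : 'I_k) (a : 'I_d) : 'I_(k * d) := mxvec_index i a.

Definition untidx k d (p : 'I_(k * d)) : 'I_k * 'I_d :=
  enum_val (cast_ord (esym (mxvec_cast k d)) p).

(* (id_k (x) Lambda) acting on operators on C^k (x) C^d, blockwise *)
Definition ampl k d (L : 'M[C]_d -> 'M[C]_d) (M : 'M[C]_(k * d)) : 'M[C]_(k * d) :=
  \matrix_(p, q)
    let: (i, a) := untidx p in
    let: (j, b) := untidx q in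
    L (\matrix_(a', b') M (tidx i a') (tidx j b')) a b.

Definition CPTP d (L : 'M[C]_d -> 'M[C]_d) : Prop :=
  [/\ linear L,
      (forall k (M : 'M[C]_(k * d)), psdmx M -> psdmx (@ampl k d L M))
    & forall X, \tr (L X) = \tr X].

(* quantum erasure channel on H_Y = H_X (+) span{alpha} = C^(d+1), where
   H_X is spanned by the first d basis vectors and alpha is the last one *)
Definition erasure d (eta : C) (rho : 'M[C]_d) : 'M[C]_(d + 1) :=
  block_mx ((1 - eta) *: rho) 0 0 ((eta * \tr rho)%:M).

Definition admissible d (eta eps : C) (L : 'M[C]_d -> 'M[C]_d) : Prop :=
  CPTP L /\
  forall rho : 'M[C]_d, densitymx rho ->
    1 - eps <= fidelity (erasure eta rho) (erasure eta (L rho)).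

Definition vker d (L : 'M[C]_d -> 'M[C]_d) (psi : 'cV[C]_d) : Prop :=
  forall rho, densitymx rho -> L rho *m psi = 0.

Definition has_dim d (S : 'cV[C]_d -> Prop) (k : nat) : Prop :=
  exists B : 'M[C]_(k, d), row_free B /\
    forall psi : 'cV[C]_d, S psi <-> (psi^T <= B)%MS.

End QDefs.

(* Notation: E = erasure eta, flag = the erasure vector |alpha>, and for
   density operators rho, tau the fidelity F(E rho, E tau) is the squared
   trace of sqrt(X), X = sqrt(E rho) E(tau) sqrt(E rho) (the "overlap").
   Both E rho and E tau have eigenvalue eta on the flag, hence so does
   sqrt(X), and sqrt(X) is psd; therefore
     (a) F(E rho, E tau) >= eta^2 for ALL density operators rho, tau;
     (b) if tau psi = 0 and rho = |psi><psi| is pure, sqrt(E rho) maps H_X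
         into the line of psi, which E tau kills, so X = eta^2 |alpha><alpha|
         and F = eta^2 exactly.
   Part (i) of the theorem follows from (a) applied to the replacement channel
   rho |-> Tr(rho) |e><e|, which we show is CPTP (its amplification is
   ptrace(M) (x) |e><e|) with kernel e^perp of dimension d - 1.  Part (ii)
   follows from (b): a nonzero kernel vector psi of an admissible channel
   would give 1 - eps <= F = eta^2.
   The file develops: adjoints and sesquilinear forms; positive semidefinite
   matrices and their square roots (via the spectral theorem); pure states;
   the erasure channel and the bounds (a), (b); partial traces and the
   replacement channel; finally the main theorem. *)

From Stdlib Require Import ClassicalEpsilon.
From HB Require Import structures.
From mathcomp Require Import all_boot all_order all_algebra.
From mathcomp Require Import ring.
Import Order.TTheory GRing.Theory Num.Theory.
Set Implicit Arguments. Unset Strict Implicit. Unset Printing Implicit Defensive.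
Local Open Scope ring_scope.

Section Adjoint.
Variable C : numClosedFieldType.

Lemma dagmxE m n (A : 'M[C]_(m, n)) i j : dagmx A i j = (A j i)^*.
Proof. by rewrite !mxE. Qed.

Lemma dagmxM m n p (A : 'M[C]_(m, n)) (B : 'M[C]_(n, p)) :
  dagmx (A *m B) = dagmx B *m dagmx A.
Proof. by rewrite /dagmx map_mxM trmx_mul. Qed.

Lemma dagmxK m n (A : 'M[C]_(m, n)) : dagmx (dagmx A) = A.
Proof. by apply/matrixP => i j; rewrite !mxE conjCK. Qed.

Lemma dagmxD m n (A B : 'M[C]_(m, n)) : dagmx (A + B) = dagmx A + dagmx B.
Proof. by rewrite /dagmx map_mxD linearD. Qed.

Lemma dagmxZ m n a (A : 'M[C]_(m, n)) : dagmx (a *: A) = a^* *: dagmx A.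
Proof. by rewrite /dagmx map_mxZ linearZ. Qed.

Lemma dagmx0 m n : dagmx (0 : 'M[C]_(m, n)) = 0.
Proof. by rewrite /dagmx map_mx0 trmx0. Qed.

Lemma dagmx_sum m n (I : finType) (F : I -> 'M[C]_(m, n)) :
  dagmx (\sum_i F i) = \sum_i dagmx (F i).
Proof. by rewrite /dagmx raddf_sum /= raddf_sum. Qed.

Lemma dagmx_col m1 m2 n (A : 'M[C]_(m1, n)) (B : 'M[C]_(m2, n)) :
  dagmx (col_mx A B) = row_mx (dagmx A) (dagmx B).
Proof. by rewrite /dagmx map_col_mx tr_col_mx. Qed.

Definition qform n (A : 'M[C]_n) (u w : 'cV[C]_n) : C := (dagmx u *m A *m w) 0 0.

Lemma qformE n (A : 'M[C]_n) (v : 'cV[C]_n) :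
  qform A v v = \sum_p \sum_q (v p 0)^* * A p q * v q 0.
Proof.
rewrite /qform mxE exchange_big; apply: eq_bigr => q _; rewrite mxE big_distrl.
by apply: eq_bigr => p _; rewrite dagmxE.
Qed.

Lemma qform_delta n (A : 'M[C]_n) i j : qform A (delta_mx i 0) (delta_mx j 0) = A i j.
Proof.
rewrite /qform; have -> : dagmx (delta_mx i 0 : 'cV[C]_n) = delta_mx 0 i.
  by apply/matrixP => a b; rewrite !mxE rmorph_nat andbC.
by rewrite -rowE -colE !mxE.
Qed.

Lemma qform_expand n (A : 'M[C]_n) u w c :
  qform A (u + c *: w) (u + c *: w) =
  qform A u u + c * qform A u w + c^* * qform A w u + c^* * c * qform A w w.
Proof.
rewrite /qform dagmxD dagmxZ !mulmxDl !mulmxDr -!scalemxAl -!scalemxAr !mxE.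
ring.
Qed.

Lemma qform_dagmx n (A : 'M[C]_n) v : qform (dagmx A) v v = (qform A v v)^*.
Proof. by rewrite /qform -[in RHS]dagmxE !dagmxM dagmxK mulmxA. Qed.

(* Polarization: over C, a matrix is determined by its quadratic form. *)
Lemma qform_eq0 n (B : 'M[C]_n) : (forall v, qform B v v = 0) -> B = 0.
Proof.
move=> HB; apply/matrixP => i j; rewrite mxE.
have Bdiag k : B k k = 0 by rewrite -qform_delta HB.
have Hc c : c * B i j + c^* * B j i = 0.
  have := HB (delta_mx i 0 + c *: delta_mx j 0).
  by rewrite qform_expand !qform_delta !Bdiag mulr0 addr0 add0r.
have := Hc 1; have := Hc 'i; rewrite conjCi rmorph1 !mul1r mulNr => Hi H1.
have Hi' : B i j - B j i = 0.
  by apply: (mulfI (neq0Ci C)); rewrite mulr0 mulrBr -Hi.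
have : 2 * B i j = (B i j + B j i) + (B i j - B j i) by ring.
by rewrite H1 Hi' addr0 => /eqP; rewrite mulf_eq0 pnatr_eq0 => /eqP.
Qed.

End Adjoint.

Section PositiveSemidefinite.
Variable C : numClosedFieldType.
Local Open Scope sesquilinear_scope.

Lemma normv_ge0 n (w : 'cV[C]_n) : 0 <= (dagmx w *m w) 0 0.
Proof.
by rewrite mxE; apply: sumr_ge0 => k _; rewrite dagmxE mulrC mul_conjC_ge0.
Qed.

Lemma normv_eq0 n (w : 'cV[C]_n) : (dagmx w *m w) 0 0 = 0 -> w = 0.
Proof.
rewrite mxE => /psumr_eq0P H; apply/matrixP => k l; rewrite ord1 mxE.
have /eqP : dagmx w 0 k * w k 0 = 0.
  by apply: H => // i _; rewrite dagmxE mulrC mul_conjC_ge0.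
by rewrite dagmxE mulrC mul_conjC_eq0 => /eqP.
Qed.

Lemma psd_proj n (e : 'cV[C]_n) : psdmx (e *m dagmx e).
Proof.
move=> v; have -> : dagmx v *m (e *m dagmx e) *m v = dagmx (dagmx e *m v) *m (dagmx e *m v).
  by rewrite dagmxM dagmxK !mulmxA.
exact: normv_ge0.
Qed.

(* A positive semidefinite matrix is Hermitian: its quadratic form is real. *)
Lemma psd_herm n (A : 'M[C]_n) : psdmx A -> dagmx A = A.
Proof.
move=> HA; apply/eqP; rewrite -subr_eq0; apply/eqP/qform_eq0 => v.
rewrite /qform mulmxBr mulmxBl.
set X := dagmx v *m dagmx A *m v; set Y := dagmx v *m A *m v.
rewrite [(X - Y) 0 0]mxE [(- Y) 0 0]mxE.
rewrite -[_ - _]/(qform (dagmx A) v v - qform A v v).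
by rewrite qform_dagmx geC0_conj ?subrr //; apply: HA.
Qed.

Lemma psd_tr_ge0 n (A : 'M[C]_n) : psdmx A -> 0 <= \tr A.
Proof. by move=> H; apply: sumr_ge0 => i _; rewrite -qform_delta; apply: H. Qed.

Lemma psd0 n : psdmx (0 : 'M[C]_n).
Proof. by move=> v; rewrite mulmx0 mul0mx mxE. Qed.

Lemma psd_scale n (a : C) (A : 'M[C]_n) : 0 <= a -> psdmx A -> psdmx (a *: A).
Proof.
by move=> a0 HA v; rewrite -scalemxAr -scalemxAl mxE mulr_ge0 //; apply: HA.
Qed.

Lemma psd_scalar n (a : C) : 0 <= a -> psdmx (a%:M : 'M_n).
Proof.
by move=> a0 v; rewrite mul_mx_scalar -scalemxAl mxE mulr_ge0 ?normv_ge0.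
Qed.

Lemma psd_conj m n (M : 'M[C]_m) (U : 'M[C]_(m, n)) :
  psdmx M -> psdmx (dagmx U *m M *m U).
Proof. by move=> H v; have := H (U *m v); rewrite dagmxM !mulmxA. Qed.

Lemma psd_diag n (d : 'rV[C]_n) : (forall i, 0 <= d 0 i) -> psdmx (diag_mx d).
Proof.
move=> H v; rewrite mul_mx_diag mxE; apply: sumr_ge0 => k _; rewrite mxE dagmxE.
by rewrite mulrC mulrA mulr_ge0 // mul_conjC_ge0.
Qed.

Lemma psd_block m n (A : 'M[C]_m) (D : 'M[C]_n) :
  psdmx A -> psdmx D -> psdmx (block_mx A 0 0 D).
Proof.
move=> HA HD v; rewrite -[v]vsubmxK dagmx_col mul_row_block mul_row_col.
by rewrite !mulmx0 !add0r addr0 mxE; apply: addr_ge0; [apply: HA | apply: HD].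
Qed.

Lemma psd_ulsub m n (S : 'M[C]_(m + n)) : psdmx S -> psdmx (ulsubmx S).
Proof.
move=> HS v; have := HS (col_mx v 0).
by rewrite -{1}[S]submxK dagmx_col dagmx0 mul_row_block mul_row_col !mulmx0 !mul0mx !addr0.
Qed.

(* For psd S, S^2 v = 0 already forces S v = 0, since |S v|^2 = <v|S^2|v>. *)
Lemma psd_sq_kernel n (S : 'M[C]_n) (v : 'cV[C]_n) :
  psdmx S -> S *m (S *m v) = 0 -> S *m v = 0.
Proof.
move=> HS E; apply: normv_eq0.
by rewrite dagmxM (psd_herm HS) -mulmxA E mulmx0 mxE.
Qed.

(* For psd S and l > 0, S^2 v = l^2 v forces S v = l v: with w = S v - l v
   one has (S + l) w = 0, and <w|(S + l)|w> >= l <w|w>. *)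
Lemma psd_sq_eigen n (S : 'M[C]_n) (v : 'cV[C]_n) (l : C) :
  psdmx S -> 0 < l -> S *m (S *m v) = (l ^+ 2) *: v -> S *m v = l *: v.
Proof.
move=> HS lp E; set w := S *m v - l *: v.
have Ew : S *m w + l *: w = 0.
  by rewrite /w mulmxBr -scalemxAr E scalerBr scalerA -expr2 addrA subrK subrr.
suff : w = 0 by move/eqP; rewrite subr_eq0 => /eqP.
apply: normv_eq0.
have : (dagmx w *m (S *m w + l *: w)) 0 0 = 0 by rewrite Ew mulmx0 mxE.
rewrite mulmxDr -scalemxAr mxE [X in _ + X]mxE mulmxA => /eqP.
rewrite paddr_eq0; first by case/andP => _; rewrite mulf_eq0 (gt_eqF lp) => /eqP.
- exact: HS.
- by rewrite mulr_ge0 ?normv_ge0 ?ltW.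
Qed.

(* Existence of a psd square root, by the spectral theorem for the
   Hermitian matrix A: A = U^* D U with D >= 0, and sqrt A = U^* sqrt(D) U. *)
Lemma psd_sqrt_exists n (A : 'M[C]_n) : psdmx A -> exists B, psdmx B /\ B *m B = A.
Proof.
move=> HA.
have Hh : A \is hermsymmx.
  by apply/is_hermitianmxP; rewrite expr0 scale1r -{1}(psd_herm HA) /dagmx map_trmx.
have /orthomx_spectralP EA := hermitian_normalmx Hh.
have Uu := spectral_unitarymx A.
move: EA Uu; set U := spectralmx A; set D := spectral_diag A => EA Uu.
have dU : U ^t* = dagmx U by rewrite /dagmx map_trmx.
rewrite invmx_unitary // dU in EA.
have UUd : U *m dagmx U = 1%:M by rewrite -dU; apply/unitarymxP.
have Dge i : 0 <= D 0 i.
  have := HA (dagmx U *m delta_mx i 0).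
  rewrite dagmxM dagmxK EA !mulmxA -(mulmxA _ U) UUd mulmx1 -(mulmxA _ U) UUd mulmx1.
  by have := qform_delta (diag_mx D) i i; rewrite /qform => ->; rewrite mxE eqxx mulr1n.
set s := \row_j sqrtC (D 0 j).
exists (dagmx U *m diag_mx s *m U); split.
  by apply: psd_conj; apply: psd_diag => i; rewrite mxE sqrtC_ge0.
rewrite EA -!mulmxA; congr (_ *m _); rewrite !mulmxA -(mulmxA _ U) UUd mulmx1.
congr (_ *m _); rewrite mulmx_diag; congr diag_mx; apply/matrixP => i j.
by rewrite !mxE ord1 -expr2 sqrtCK.
Qed.

Lemma psd_sqrt_spec n (A : 'M[C]_n) :
  psdmx A -> psdmx (psd_sqrt A) /\ psd_sqrt A *m psd_sqrt A = A.
Proof.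
move=> HA; apply: (epsilon_spec (inhabits 0) (fun B => psdmx B /\ B *m B = A)).
exact: psd_sqrt_exists.
Qed.

Lemma psd_sqrt_eigen n (A : 'M[C]_n) (v : 'cV[C]_n) a :
  psdmx A -> A *m v = a *: v -> 0 <= a -> psd_sqrt A *m v = sqrtC a *: v.
Proof.
move=> HA Ev a0; have [HP HPP] := psd_sqrt_spec HA.
have EPP : psd_sqrt A *m (psd_sqrt A *m v) = a *: v by rewrite mulmxA HPP.
have [az|anz] := eqVneq a 0.
  by rewrite az sqrtC0 scale0r; apply: psd_sq_kernel; rewrite // EPP az scale0r.
by apply: psd_sq_eigen; rewrite ?sqrtCK // sqrtC_gt0 lt_def anz.
Qed.

End PositiveSemidefinite.

Section PureStates.
Variables (C : numClosedFieldType) (d : nat).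

Definition pure (psi : 'cV[C]_d) : 'M[C]_d :=
  ((dagmx psi *m psi) 0 0)^-1 *: (psi *m dagmx psi).

Variable psi : 'cV[C]_d.
Hypothesis psi_neq0 : psi != 0.

Lemma normv_gt0 : 0 < (dagmx psi *m psi) 0 0.
Proof.
by rewrite lt_def normv_ge0 andbT; apply: contra psi_neq0 => /eqP/normv_eq0 ->.
Qed.

Lemma pureM (w : 'cV[C]_d) :
  pure psi *m w = (((dagmx psi *m psi) 0 0)^-1 * (dagmx psi *m w) 0 0) *: psi.
Proof.
by rewrite /pure -scalemxAl -mulmxA {1}[dagmx psi *m w]mx11_scalar mul_mx_scalar scalerA.
Qed.

Lemma pure_psi : pure psi *m psi = psi.
Proof. by rewrite pureM mulVf ?scale1r // gt_eqF ?normv_gt0. Qed.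

Lemma pure_density : densitymx (pure psi).
Proof.
split; first by apply: psd_scale; [rewrite invr_ge0 ltW ?normv_gt0 | apply: psd_proj].
have tr11 (M : 'M[C]_1) : \tr M = M 0 0 by rewrite /mxtrace big_ord1.
by rewrite /pure mxtraceZ mxtrace_mulC tr11 mulVf // gt_eqF ?normv_gt0.
Qed.

End PureStates.

Section Erasure.
Variables (C : numClosedFieldType) (d : nat) (eta : C).
Hypothesis eta01 : 0 <= eta <= 1.

Definition flag : 'cV[C]_(d + 1) := col_mx 0 1.

Lemma eq_on_HX_flag (X Y : 'M[C]_(d + 1)) :
  (forall w : 'cV[C]_d, X *m col_mx w 0 = Y *m col_mx w 0) ->
  X *m flag = Y *m flag -> X = Y.
Proof.
move=> HX Hflag.
have Hv (v : 'cV[C]_(d + 1)) : X *m v = Y *m v.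
  rewrite -[v]vsubmxK.
  have -> : col_mx (usubmx v) (dsubmx v) = col_mx (usubmx v) 0 + (dsubmx v) 0 0 *: flag.
    rewrite /flag scale_col_mx scaler0 add_col_mx add0r addr0; congr col_mx.
    by rewrite [LHS]mx11_scalar scalemx1.
  by rewrite !mulmxDr -!scalemxAr HX Hflag.
apply/matrixP => i j; have /matrixP/(_ i 0) := Hv (delta_mx j 0).
by rewrite -!colE !mxE.
Qed.

Lemma erasure_flag (rho : 'M[C]_d) : \tr rho = 1 -> erasure eta rho *m flag = eta *: flag.
Proof.
move=> H; rewrite /erasure H mulr1 /flag mul_block_col scale_col_mx.
by rewrite !mulmx0 !mul0mx !addr0 add0r scaler0 mulmx1 scalemx1.
Qed.

Lemma erasure_HX (rho : 'M[C]_d) (w : 'cV[C]_d) :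
  erasure eta rho *m col_mx w 0 = col_mx ((1 - eta) *: (rho *m w)) 0.
Proof. by rewrite /erasure mul_block_col !mulmx0 !mul0mx !addr0 -scalemxAl. Qed.

Lemma erasure_psd (rho : 'M[C]_d) : densitymx rho -> psdmx (erasure eta rho).
Proof.
case/andP: eta01 => e0 e1 [Hp Ht]; rewrite /erasure Ht mulr1.
by apply: psd_block; [apply: psd_scale; rewrite ?subr_ge0 | apply: psd_scalar].
Qed.

Definition overlap (rho tau : 'M[C]_d) : 'M[C]_(d + 1) :=
  psd_sqrt (erasure eta rho) *m erasure eta tau *m psd_sqrt (erasure eta rho).

(* Both erased states carry weight eta on the flag, so the overlap does too. *)
Lemma overlap_flag (rho tau : 'M[C]_d) : densitymx rho -> \tr tau = 1 ->
  overlap rho tau *m flag = (eta ^+ 2) *: flag.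
Proof.
move=> Hrho Htau; case/andP: eta01 => e0 _.
have Pflag : psd_sqrt (erasure eta rho) *m flag = sqrtC eta *: flag.
  by apply: psd_sqrt_eigen; [apply: erasure_psd | rewrite erasure_flag //; case: Hrho |].
rewrite /overlap -!mulmxA Pflag -!scalemxAr erasure_flag // -!scalemxAr Pflag !scalerA.
by congr (_ *: _); rewrite mulrAC -expr2 sqrtCK expr2.
Qed.

(* Lower bound: whatever tau is, the erasure outputs share the flag component,
   so F(E rho, E tau) >= eta^2. The root of the overlap has eigenvalue eta on
   the flag and a psd upper-left block, hence trace at least eta. *)
Lemma fidelity_erasure_ge (rho tau : 'M[C]_d) : densitymx rho -> densitymx tau ->
  eta ^+ 2 <= fidelity (erasure eta rho) (erasure eta tau).
Proof.
move=> Hrho Htau; case/andP: eta01 => e0 _.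
have [HP _] := psd_sqrt_spec (erasure_psd Hrho).
have HX : psdmx (overlap rho tau).
  by rewrite /overlap -{1}(psd_herm HP); apply: psd_conj; apply: erasure_psd.
have [HS _] := psd_sqrt_spec HX.
have Sflag : psd_sqrt (overlap rho tau) *m flag = eta *: flag.
  rewrite (psd_sqrt_eigen HX (overlap_flag Hrho _)) ?exprn_ge0 ?sqrCK //.
  by case: Htau.
have trS : eta <= \tr (psd_sqrt (overlap rho tau)).
  move: Sflag HS; set S := psd_sqrt _ => Sflag HS.
  move: Sflag; rewrite -[S]submxK /flag mul_block_col !mulmx0 !add0r !mulmx1.
  rewrite scale_col_mx scaler0 scalemx1 => /eq_col_mx [_ ->].
  rewrite mxtrace_block mxtrace_scalar mulr1n lerDr psd_tr_ge0 //.
  exact: psd_ulsub HS.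
by rewrite /fidelity -/(overlap rho tau) lerXn2r // nnegrE (le_trans e0 trS).
Qed.

(* The root of the erased pure state maps H_X into the line through psi:
   it kills the orthogonal complement of psi and rescales psi. *)
Lemma sqrt_erasure_pure (psi w : 'cV[C]_d) : psi != 0 ->
  exists c, psd_sqrt (erasure eta (pure psi)) *m col_mx w 0 = c *: col_mx psi 0.
Proof.
move=> psi0; case/andP: eta01 => _ e1.
have HE := erasure_psd (pure_density psi0).
set k := ((dagmx psi *m psi) 0 0)^-1 * (dagmx psi *m w) 0 0.
have Pperp : psd_sqrt (erasure eta (pure psi)) *m col_mx (w - k *: psi) 0 = 0.
  rewrite -[RHS](scale0r (col_mx (w - k *: psi) 0)) -sqrtC0.
  apply: psd_sqrt_eigen => //.
  by rewrite erasure_HX mulmxBr -scalemxAr pure_psi // pureM // subrr !scaler0 col_mx0 scale0r.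
have Ppsi : psd_sqrt (erasure eta (pure psi)) *m col_mx psi 0 =
    sqrtC (1 - eta) *: col_mx psi 0.
  apply: psd_sqrt_eigen; rewrite ?subr_ge0 //.
  by rewrite erasure_HX pure_psi // scale_col_mx scaler0.
exists (k * sqrtC (1 - eta)).
have -> : col_mx w (0 : 'cV[C]_1) = k *: col_mx psi 0 + col_mx (w - k *: psi) 0.
  by rewrite scale_col_mx scaler0 add_col_mx addr0 addrC subrK.
by rewrite mulmxDr -scalemxAr Ppsi Pperp addr0 scalerA.
Qed.

(* Upper bound: if tau annihilates psi, the overlap of the erased pure state
   psi with the erasure of tau lives on the flag alone, and F = eta^2. *)
Lemma fidelity_erasure_kernel (psi : 'cV[C]_d) (tau : 'M[C]_d) :
  psi != 0 -> \tr tau = 1 -> tau *m psi = 0 ->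
  fidelity (erasure eta (pure psi)) (erasure eta tau) = eta ^+ 2.
Proof.
move=> psi0 Htau tau_psi; case/andP: eta01 => e0 _.
set X := overlap (pure psi) tau.
have XHX (w : 'cV[C]_d) : X *m col_mx w 0 = 0.
  have [c Pw] := sqrt_erasure_pure w psi0.
  by rewrite /X /overlap -!mulmxA Pw -!scalemxAr erasure_HX tau_psi scaler0 col_mx0 mulmx0 scaler0.
have Xflag : X *m flag = (eta ^+ 2) *: flag.
  exact: overlap_flag (pure_density psi0) Htau.
have flag_block a : block_mx 0 0 0 a%:M *m flag = a *: flag.
  by rewrite /flag mul_block_col !mul0mx !mulmx1 !add0r scale_col_mx scaler0 scalemx1.
have HX_block a (w : 'cV[C]_d) : block_mx 0 0 0 a%:M *m col_mx w 0 = 0.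
  by rewrite mul_block_col !mul0mx !mulmx0 !addr0 col_mx0.
have EX : X = block_mx 0 0 0 (eta ^+ 2)%:M.
  by apply: eq_on_HX_flag => [w|]; rewrite ?HX_block ?XHX ?flag_block.
have HXpsd : psdmx X.
  by rewrite EX; apply: psd_block; [apply: psd0 | apply: psd_scalar; rewrite exprn_ge0].
have ES : psd_sqrt X = block_mx 0 0 0 eta%:M.
  apply: eq_on_HX_flag => [w|]; rewrite ?HX_block ?flag_block.
    rewrite -[RHS](scale0r (col_mx w 0)) -sqrtC0.
    by apply: psd_sqrt_eigen; rewrite ?XHX ?scale0r.
  by rewrite (psd_sqrt_eigen HXpsd Xflag) ?exprn_ge0 ?sqrCK.
by rewrite /fidelity -/X ES mxtrace_block mxtrace0 mxtrace_scalar mulr1n add0r.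
Qed.

End Erasure.

Section Amplification.
Variable C : numClosedFieldType.

Lemma untidxK k d (i : 'I_k) (a : 'I_d) : untidx (tidx i a) = (i, a).
Proof. by rewrite /untidx /tidx /mxvec_index cast_ordK enum_rankK. Qed.

Lemma sum_tidx k d (F : 'I_(k * d) -> C) :
  \sum_p F p = \sum_(i < k) \sum_(a < d) F (tidx i a).
Proof.
rewrite pair_big /= (reindex (fun x : 'I_k * 'I_d => tidx x.1 x.2)) //=.
exists (@untidx k d) => [[i a] _ | p _]; first by rewrite untidxK.
by case: (mxvec_indexP p) => i a; rewrite -/(tidx i a) untidxK.
Qed.

Definition ptrace k d (M : 'M[C]_(k * d)) : 'M[C]_k :=
  \matrix_(i, j) \sum_(c < d) M (tidx i c) (tidx j c).

(* The partial trace of a psd operator is psd: its form at w is the sum over c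
   of the form of M at the vectors sum_i w_i |i>|c>. *)
Lemma ptrace_psd k d (M : 'M[C]_(k * d)) : psdmx M -> psdmx (ptrace M).
Proof.
move=> HM w.
set u := fun c : 'I_d => \sum_(i < k) w i 0 *: (delta_mx (tidx i c) 0 : 'cV[C]_(k * d)).
have Eu c : qform M (u c) (u c) =
    \sum_(i < k) \sum_(j < k) (w i 0)^* * M (tidx i c) (tidx j c) * w j 0.
  rewrite /qform dagmx_sum mulmx_suml mulmx_suml summxE; apply: eq_bigr => i _.
  rewrite mulmx_sumr summxE; apply: eq_bigr => j _.
  have := qform_delta M (tidx i c) (tidx j c); rewrite /qform => Mij.
  by rewrite dagmxZ -scalemxAl -scalemxAl -scalemxAr mxE mxE Mij; ring.
have -> : (dagmx w *m ptrace M *m w) 0 0 = \sum_(c < d) qform M (u c) (u c).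
  under [RHS]eq_bigr do rewrite Eu.
  rewrite -/(qform _ w w) qformE [RHS]exchange_big; apply: eq_bigr => i _.
  rewrite [RHS]exchange_big; apply: eq_bigr => j _.
  by rewrite mxE mulr_sumr mulr_suml.
by apply: sumr_ge0 => c _; apply: HM.
Qed.

End Amplification.

Lemma has_dim_rows (C : numClosedFieldType) d (S : 'cV[C]_d -> Prop) r (B : 'M[C]_(r, d)) k :
  r = k -> row_free B -> (forall psi, S psi <-> (psi^T <= B)%MS) -> has_dim S k.
Proof. by move=> <- HB HS; exists B. Qed.

Section ReplacementChannel.
Variables (C : numClosedFieldType) (d : nat) (e : 'cV[C]_d).

Definition replace (rho : 'M[C]_d) : 'M[C]_d := \tr rho *: (e *m dagmx e).

Lemma replace_linear : linear replace.
Proof. by move=> a u v; rewrite /replace mxtraceD mxtraceZ scalerDl scalerA. Qed.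

Lemma ampl_replace k (M : 'M[C]_(k * d)) i a j b :
  ampl replace M (tidx i a) (tidx j b) = ptrace M i j * (e a 0 * (e b 0)^*).
Proof.
rewrite /ampl mxE !untidxK /replace !mxE big_ord1 dagmxE.
by congr (_ * _); apply: eq_bigr => c _; rewrite mxE.
Qed.

(* Complete positivity: the form of ptrace M (x) |e><e| at v equals the form
   of ptrace M at the vector w_i = sum_b conj(e_b) v_(i,b). *)
Lemma replace_cp k (M : 'M[C]_(k * d)) : psdmx M -> psdmx (ampl replace M).
Proof.
move=> HM v.
set w : 'cV[C]_k := \col_i \sum_(b < d) (e b 0)^* * v (tidx i b) 0.
suff E : qform (ampl replace M) v v = qform (ptrace M) w w.
  by change (0 <= qform (ampl replace M) v v); rewrite E; apply: ptrace_psd.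
rewrite !qformE sum_tidx; apply: eq_bigr => i _.
under eq_bigr => a _ do rewrite sum_tidx.
rewrite exchange_big; apply: eq_bigr => j _.
rewrite !mxE rmorph_sum !big_distrl /=; apply: eq_bigr => a _.
rewrite big_distrr /=; apply: eq_bigr => b _.
by rewrite ampl_replace mxE rmorphM /= conjCK; ring.
Qed.

Hypothesis e_unit : dagmx e *m e = 1.

Lemma replace_tr (rho : 'M[C]_d) : \tr (replace rho) = \tr rho.
Proof. by rewrite /replace mxtraceZ mxtrace_mulC e_unit mxtrace1 mulr1. Qed.

Lemma replace_density (rho : 'M[C]_d) : densitymx rho -> densitymx (replace rho).
Proof.
case=> _ Htr; split; last by rewrite replace_tr.
by rewrite /replace Htr scale1r; apply: psd_proj.
Qed.

(* K(replace) is the orthogonal complement of e, of dimension d - 1. *)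
Lemma vker_replace : has_dim (vker replace) d.-1.
Proof.
have rank_e : \rank (dagmx e) = 1%N.
  apply/eqP; rewrite eqn_leq rank_leq_row lt0n mxrank_eq0.
  by apply/eqP => e0; move: e_unit; rewrite e0 mul0mx => /eqP; rewrite eq_sym oner_eq0.
have Htr_e : \tr (e *m dagmx e) = 1 by rewrite mxtrace_mulC e_unit mxtrace1.
have rho_e : densitymx (e *m dagmx e) by split; [apply: psd_proj |].
apply: (has_dim_rows (B := row_base (kermx (dagmx e)^T))).
- by rewrite mxrank_ker mxrank_tr rank_e subn1.
- exact: row_base_free.
move=> psi; rewrite eq_row_base sub_kermx -trmx_mul -trmx0 (inj_eq trmx_inj).
split => [Hpsi | /eqP He rho _].
- have := Hpsi _ rho_e; rewrite /replace Htr_e scale1r.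
  by move/(congr1 (mulmx (dagmx e))); rewrite mulmx0 !mulmxA e_unit mul1mx => ->.
- by rewrite /replace -scalemxAl -mulmxA He mulmx0 scaler0.
Qed.

End ReplacementChannel.

Theorem mainTheorem1 (C : numClosedFieldType) (d : nat) (eta eps : C) :
  (2 <= d)%N -> 0 <= eta <= 1 -> 0 <= eps <= 1 ->
  (eta ^+ 2 >= 1 - eps ->
     forall e : 'cV[C]_d, dagmx e *m e = 1 ->
       let L := fun rho : 'M[C]_d => \tr rho *: (e *m dagmx e) in
       admissible eta eps L /\ has_dim (vker L) d.-1)
  /\
  (eta ^+ 2 < 1 - eps ->
     forall L : 'M[C]_d -> 'M[C]_d, admissible eta eps L ->
       forall psi : 'cV[C]_d, vker L psi -> psi = 0).
Proof.
move=> _ eta01 _; split.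
  move=> eta_large e e_unit L; split; last exact: vker_replace.
  split; first split.
  - exact: replace_linear.
  - by move=> k M; apply: replace_cp.
  - exact: replace_tr.
  - move=> rho Hrho; apply: le_trans eta_large _.
    by have := fidelity_erasure_ge eta01 Hrho (replace_density e_unit Hrho).
move=> eta_small L [[_ _ L_tr] L_fid] psi Hpsi.
have [//|psi0] := eqVneq psi 0.
have [_ pure_tr] := pure_density psi0.
have := L_fid _ (pure_density psi0).
rewrite fidelity_erasure_kernel ?L_tr //; last exact: Hpsi (pure_density psi0).
by move=> /(lt_le_trans eta_small); rewrite ltxx.
Qed.
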